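(* Let $\mathcal{C}$ be a finite set of classes and let $\ell_\star, \ell_1, \dots, \ell_K$ ($K \ge 1$) be $\mathcal{C}$-valued random variables on a common probability space, where $\ell_\star$ is the oracle label and $\ell_i$ is the label given by annotator $i$. Assume the annotators are positively correlated, namely $\mathbb{P}(\ell_i = \ell_\star \mid \ell_j = \ell_\star) \ge \mathbb{P}(\ell_i = \ell_\star)$ for all $i, j \in \{1, \dots, K\}$ with $\mathbb{P}(\ell_j = \ell_\star) > 0$. Then $$\frac{1}{K}\sum_{i=1}^K \mathbb{P}(\ell_i = \ell_\star) \;\le\; \mathcal{U} := \sqrt{\frac{1}{K^2}\sum_{i=1}^K\sum_{j=1}^K \mathbb{P}(\ell_i = \ell_j)}.$$
   Context: The quantity $\frac{1}{K}\sum_{i=1}^K \mathbb{P}(\ell_i = \ell_\star)$ is the oracle accuracy $\mathbb{P}(\ell_{\mathcal K} = \ell_\star)$ of the ''average annotator'' $\ell_{\mathcal K}$, i.e. the label obtained by choosing one of the $K$ annotators uniformly at random (independently of everything else). *)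

From mathcomp Require Import all_boot all_order all_algebra.
From mathcomp Require Import all_classical all_reals all_analysis.
Set Implicit Arguments. Unset Strict Implicit. Unset Printing Implicit Defensive.
Import Order.TTheory GRing.Theory Num.Theory.
Local Open Scope classical_set_scope.
Local Open Scope ring_scope.

Definition pr d (T : measurableType d) (R : realType) (P : probability T R)
  (A : set T) : R := fine (P A).

Definition cond_pr d (T : measurableType d) (R : realType) (P : probability T R)
  (A B : set T) : R := pr P (A `&` B) / pr P B.

Definition eq_event (T C : Type) (f g : T -> C) : set T := [set x | f x = g x].

(** A random variable with values in a finite set C (discrete σ-algebra on C). *)
Definition finite_rv d (T : measurableType d) (C : finType) (f : T -> C) : Prop :=
  forall c : C, measurable (f @^-1` [set c]).

From mathcomp Require Import all_boot all_order all_algebra.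
From mathcomp Require Import all_classical all_reals all_analysis.
Set Implicit Arguments. Unset Strict Implicit. Unset Printing Implicit Defensive.
Import Order.TTheory GRing.Theory Num.Theory.
Local Open Scope classical_set_scope.
Local Open Scope ring_scope.

(* Positive correlation gives
     P(l_i = l_star) P(l_j = l_star) <= P(l_i = l_star = l_j) <= P(l_i = l_j).
   Summing over i and j bounds the square of the summed oracle accuracies by
   the summed pairwise agreements; divide by K^2 and take square roots. *)

Lemma eq_event_trans (T C : Type) (f g h : T -> C) :
  eq_event f h `&` eq_event g h `<=` eq_event f g.
Proof. by move=> x [/= fh gh]; rewrite /eq_event /= fh gh. Qed.

Lemma measurable_eq_event d (T : measurableType d) (C : finType) (f g : T -> C) :
  finite_rv f -> finite_rv g -> measurable (eq_event f g).
Proof.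
move=> mf mg.
have -> : eq_event f g =
    \bigcup_(c in [set: C]) (f @^-1` [set c] `&` g @^-1` [set c]).
  apply/seteqP; split => x /=; first by move=> fg; exists (f x).
  by case=> c _ [/= fc gc]; rewrite /eq_event /= fc gc.
apply: fin_bigcup_measurable; first exact: finite_finset.
by move=> c _; apply: measurableI.
Qed.

Section Pr.
Variables (d : measure_display) (T : measurableType d) (R : realType).
Variable P : probability T R.

Lemma pr_ge0 (A : set T) : 0 <= pr P A.
Proof. exact/fine_ge0/measure_ge0. Qed.

Lemma le_pr (A B : set T) :
  A `<=` B -> measurable A -> measurable B -> pr P A <= pr P B.
Proof.
have fin_P E : measurable E -> P E \is a fin_num.
  move=> mE; rewrite ge0_fin_numE ?measure_ge0 //.
  exact: le_lt_trans (probability_le1 P mE) (ltry _).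
move=> AB mA mB; apply: fine_le; rewrite ?fin_P //.
by apply: le_measure; rewrite ?inE.
Qed.

Lemma mul_pr_le_prI (A B : set T) :
  (0 < pr P B -> pr P A <= cond_pr P A B) -> pr P A * pr P B <= pr P (A `&` B).
Proof.
move=> corr; have [B_gt0|] := ltP 0 (pr P B).
  by rewrite -ler_pdivlMr //; exact: corr.
by rewrite le_eqVlt ltNge pr_ge0 orbF => /eqP ->; rewrite mulr0 pr_ge0.
Qed.

End Pr.

Lemma mean_le_sqrt_pair_mean (R : rcfType) (K : nat) (a : 'I_K -> R)
    (b : 'I_K -> 'I_K -> R) :
  (0 < K)%N -> (forall i, 0 <= a i) -> (forall i j, a i * a j <= b i j) ->
  K%:R^-1 * (\sum_(i < K) a i)
    <= Num.sqrt ((K%:R ^+ 2)^-1 * (\sum_(i < K) \sum_(j < K) b i j)).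
Proof.
move=> K_gt0 a_ge0 ab.
have sum_a_ge0 : 0 <= \sum_(i < K) a i by apply: sumr_ge0.
have sqr_le : (\sum_(i < K) a i) ^+ 2 <= \sum_(i < K) \sum_(j < K) b i j.
  rewrite expr2 big_distrl /=; apply: ler_sum => i _.
  by rewrite big_distrr /=; apply: ler_sum => j _.
have invK_ge0 : 0 <= K%:R^-1 :> R by rewrite invr_ge0 ler0n.
rewrite -[leLHS]ger0_norm ?mulr_ge0 // -sqrtr_sqr ler_sqrt; last first.
  by rewrite mulr_ge0 ?invr_ge0 ?exprn_ge0 ?ler0n // (le_trans _ sqr_le) ?sqr_ge0.
by rewrite exprMn exprVn; apply: ler_wpM2l; rewrite ?invr_ge0 ?exprn_ge0 ?ler0n.
Qed.

Theorem theorem1 (d : measure_display) (T : measurableType d) (R : realType)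
  (P : probability T R) (C : finType) (K : nat) (hK : (1 <= K)%N)
  (lstar : T -> C) (l : 'I_K -> T -> C)
  (hstar : finite_rv lstar) (hl : forall i, finite_rv (l i))
  (hcorr : forall i j : 'I_K, 0 < pr P (eq_event (l j) lstar) ->
     cond_pr P (eq_event (l i) lstar) (eq_event (l j) lstar)
       >= pr P (eq_event (l i) lstar)) :
  K%:R^-1 * (\sum_(i < K) pr P (eq_event (l i) lstar))
    <= Num.sqrt ((K%:R ^+ 2)^-1 *
                 (\sum_(i < K) \sum_(j < K) pr P (eq_event (l i) (l j)))).
Proof.
apply: mean_le_sqrt_pair_mean => // [i|i j]; first exact: pr_ge0.
apply: le_trans (mul_pr_le_prI (hcorr i j)) _ => /=.
apply: le_pr; first exact: eq_event_trans.
  by apply: measurableI; apply: measurable_eq_event.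
exact: measurable_eq_event (hl i) (hl j).
Qed.
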